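(* Let $k\ge2$ and let $\mathcal C_2$ be the binary $(2k+1,k)$ code with generator matrix $G_c=(e_1\ \ e_1\ \ e_1+e_2\ \ e_2\ \ e_2+e_3\ \ e_3\ \cdots\ e_{k-1}+e_k\ \ e_k\ \ e_k)$. Then every erasure pattern with at most $2$ erasures allows for parallel $3$-repair.
   Context: $e_i$ denotes the $i$-th standard unit vector of $\mathbb F_2^k$; $\mathcal C_2$ has minimum distance $3$. Let $g_1,\dots,g_{2k+1}$ be the columns of $G_c$; nodes are the coordinates of codewords $c=uG_c$. An erasure pattern is a set of erased nodes; the others are live. A node $c_i$ is related to distinct nodes $c_{j_1},\dots,c_{j_\gamma}$ (all different from $c_i$) if $g_i=g_{j_1}+\dots+g_{j_\gamma}$. An erased node allows for $r$-repair if it is related to $\gamma\le r$ live nodes. An erasure pattern allows for parallel $r$-repair if each erased node allows for $r$-repair with respect to the original set of live nodes. *)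

From mathcomp Require Import all_boot all_order all_algebra.
Set Implicit Arguments. Unset Strict Implicit. Unset Printing Implicit Defensive.
Import GRing.Theory.
Local Open Scope ring_scope.

(* Standard unit vector e_{i+1} of F_2^k, 0-indexed: unitv k i has a 1 at
   position i (positions 0..k-1). *)
Definition unitv (k i : nat) : 'rV['F_2]_k :=
  \row_(l < k) (if nat_of_ord l == i then 1 else 0).

(* Column j (0-indexed, j = 0..2k) of
   G_c = (e1 e1 e1+e2 e2 e2+e3 e3 ... e_{k-1}+e_k e_k e_k). *)
Definition gcol (k : nat) (j : 'I_(2 * k + 1)) : 'rV['F_2]_k :=
  let j' := nat_of_ord j in
  if j' == 0%N then unitv k 0
  else if odd j' then unitv k j'./2
  else if j' == (2 * k)%N then unitv k (k - 1)
  else unitv k (j'./2 - 1) + unitv k j'./2.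

Definition related (k : nat) (i : 'I_(2 * k + 1)) (S : {set 'I_(2 * k + 1)}) :=
  i \notin S /\ gcol i = \sum_(j in S) gcol j.

Definition allows_repair (k : nat) (E : {set 'I_(2 * k + 1)}) (r : nat)
  (i : 'I_(2 * k + 1)) :=
  exists S : {set 'I_(2 * k + 1)},
    [/\ related i S, [disjoint S & E] & (#|S| <= r)%N].

Definition parallel_repair (k : nat) (E : {set 'I_(2 * k + 1)}) (r : nat) :=
  forall i, i \in E -> allows_repair E r i.

From mathcomp Require Import all_boot all_order all_algebra.
From mathcomp Require Import zify.
Set Implicit Arguments.
Unset Strict Implicit.
Unset Printing Implicit Defensive.
Import GRing.Theory.
Local Open Scope ring_scope.

(* Each unit vector e_m is the sum of the columns of each of three pairwise
   disjoint sets of at most two nodes, lying below, at and above node 2m+1.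
   A node with column e_m forms one of these sets by itself, and as the other
   two are disjoint, one of them avoids any second erased node. A node with
   column e_m + e_(m+1) is repaired by the middle sets for e_m and e_(m+1);
   if one of those is erased it is replaced by the outer set on its side,
   which keeps the repair within three nodes. *)

Definition gcoln (k j : nat) : 'rV['F_2]_k :=
  if j == 0%N then unitv k 0
  else if odd j then unitv k j./2
  else if j == (2 * k)%N then unitv k (k - 1)
  else unitv k (j./2 - 1) + unitv k j./2.

Lemma gcolE k (j : 'I_(2 * k + 1)) : gcol j = gcoln k j.
Proof. by []. Qed.

Lemma gcoln0 k : gcoln k 0 = unitv k 0.
Proof. by []. Qed.

Lemma gcoln_odd k m : gcoln k (2 * m + 1)%N = unitv k m.
Proof.
rewrite /gcoln (_ : odd _ = true); last by rewrite addn1 /= oddM.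
have -> : (2 * m + 1 == 0)%N = false by lia.
by congr unitv; rewrite -divn2; lia.
Qed.

Lemma gcoln_even k m : (m.+1 < k)%N ->
  gcoln k (2 * m.+1)%N = unitv k m + unitv k m.+1.
Proof.
move=> mk; rewrite /gcoln (_ : odd _ = false) ?oddM //.
have -> : (2 * m.+1 == 0)%N = false by lia.
have -> : (2 * m.+1 == 2 * k)%N = false by lia.
have -> : ((2 * m.+1)./2 = m.+1)%N by rewrite -divn2; lia.
by rewrite subn1.
Qed.

Lemma gcoln_last k m : m.+1 = k -> gcoln k (2 * k)%N = unitv k m.
Proof.
move=> <-; rewrite /gcoln (_ : odd _ = false) ?oddM // eqxx.
have -> : (2 * m.+1 == 0)%N = false by lia.
by rewrite subn1.
Qed.

Lemma addrr_F2 n (v : 'rV['F_2]_n) : v + v = 0.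
Proof.
by apply/rowP => l; rewrite !mxE; case: (v 0 l) => [[|[|//]] ?]; apply/val_inj.
Qed.

Definition represents k m (r : seq nat) :=
  [/\ uniq r, all (fun x => x < 2 * k + 1)%N r, (size r <= 2)%N
    & \sum_(x <- r) gcoln k x = unitv k m].

Definition rep_lo (m : nat) : seq nat :=
  if m is m'.+1 then [:: 2 * m' + 1; 2 * m]%N else [:: 0%N].

Definition rep_mid (m : nat) : seq nat := [:: 2 * m + 1]%N.

Definition rep_hi (k m : nat) : seq nat :=
  if m.+1 == k then [:: 2 * k]%N else [:: 2 * m + 2; 2 * m + 3]%N.

Lemma rep_lo_le m x : x \in rep_lo m -> (x <= 2 * m)%N.
Proof. by case: m => [|m]; rewrite !inE; [move/eqP -> | case/orP => /eqP ->]; lia. Qed.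

Lemma rep_hi_gt k m x : x \in rep_hi k m -> (2 * m + 1 < x)%N.
Proof.
rewrite /rep_hi; case: eqP => [<-|_]; rewrite !inE; first by move/eqP->; lia.
by case/orP => /eqP ->; lia.
Qed.

Lemma rep_lo_represents k m : (m < k)%N -> represents k m (rep_lo m).
Proof.
case: m => [|m] mk; first by rewrite /represents big_seq1; split=> //=; lia.
split=> /=; [rewrite inE; lia | lia | by [] |].
by rewrite !big_cons big_nil addr0 gcoln_odd gcoln_even // addrA addrr_F2 add0r.
Qed.

Lemma rep_mid_represents k m : (m < k)%N -> represents k m (rep_mid m).
Proof. by move=> mk; split; rewrite /= ?big_seq1 ?gcoln_odd //; lia. Qed.

Lemma rep_hi_represents k m : (m < k)%N -> represents k m (rep_hi k m).
Proof.
move=> mk; rewrite /rep_hi; case: eqP => [km|kmF].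
  by split; rewrite /= ?big_seq1 ?(gcoln_last km) //; lia.
have mk1 : (m.+1 < k)%N by lia.
split=> /=; [rewrite inE; lia | lia | by [] |].
have -> : (2 * m + 2 = 2 * m.+1)%N by lia.
have -> : (2 * m + 3 = 2 * m.+1 + 1)%N by lia.
by rewrite !big_cons big_nil addr0 gcoln_odd gcoln_even // -addrA addrr_F2 addr0.
Qed.

Definition repair_seq k (i : nat) (s : seq nat) :=
  [/\ uniq s, all (fun x => x < 2 * k + 1)%N s, (size s <= 3)%N, i \notin s
    & gcoln k i = \sum_(x <- s) gcoln k x].

Lemma repair_unit_node (k m i e : nat) (r1 r2 : seq nat) :
  gcoln k i = unitv k m -> represents k m r1 -> represents k m r2 ->
  i \notin r1 -> i \notin r2 -> {in r1, forall x, x \notin r2} ->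
  exists2 s, repair_seq k i s & e \notin s.
Proof.
move=> gi [u1 a1 z1 s1] [u2 a2 z2 s2] i1 i2 r12.
have [e1|e1] := boolP (e \in r1).
  by exists r2; [split; rewrite ?gi ?s2 //; lia | exact: r12].
by exists r1 => //; split; rewrite ?gi ?s1 //; lia.
Qed.

Lemma repair_even_node k m r1 r2 :
  (m.+1 < k)%N -> represents k m r1 -> represents k m.+1 r2 ->
  {in r1, forall x, x < 2 * m.+1}%N -> {in r2, forall x, 2 * m.+1 < x}%N ->
  (size r1 + size r2 <= 3)%N -> repair_seq k (2 * m.+1)%N (r1 ++ r2).
Proof.
move=> mk [u1 a1 _ s1] [u2 a2 _ s2] lt1 gt2 sz.
split; rewrite ?size_cat ?all_cat ?a1 ?a2 //.
- rewrite cat_uniq u1 u2 andbT; apply/hasPn => x /gt2 x2.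
  by apply/negP => /lt1; lia.
- by rewrite mem_cat; apply/norP; split; apply/negP; [move/lt1 | move/gt2]; lia.
- by rewrite big_cat /= s1 s2 gcoln_even.
Qed.

Lemma repair_even_node_avoiding (k m e : nat) : (m.+1 < k)%N ->
  exists2 s, repair_seq k (2 * m.+1)%N s & e \notin s.
Proof.
move=> mk; have mk' : (m < k)%N by lia.
have lo_lt x : x \in rep_lo m -> (x < 2 * m.+1)%N by move/rep_lo_le; lia.
have mid_lt x : x \in rep_mid m -> (x < 2 * m.+1)%N by rewrite inE => /eqP ->; lia.
have mid_gt x : x \in rep_mid m.+1 -> (2 * m.+1 < x)%N by rewrite inE => /eqP ->; lia.
have hi_gt x : x \in rep_hi k m.+1 -> (2 * m.+1 < x)%N by move/rep_hi_gt; lia.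
have [-> | e_lo] := eqVneq e (2 * m + 1)%N.
  exists (rep_lo m ++ rep_mid m.+1).
    apply: repair_even_node; rewrite ?size_cat //; last by case: (m).
    - exact: rep_lo_represents.
    - exact: rep_mid_represents.
  by rewrite mem_cat !inE negb_or; apply/andP; split; [apply/negP => /rep_lo_le|]; lia.
have [-> | e_hi] := eqVneq e (2 * m.+1 + 1)%N.
  exists (rep_mid m ++ rep_hi k m.+1).
    apply: repair_even_node; rewrite ?size_cat //; last by rewrite /rep_hi; case: eqP.
    - exact: rep_mid_represents.
    - exact: rep_hi_represents.
  by rewrite mem_cat !inE negb_or; apply/andP; split; [|apply/negP => /rep_hi_gt]; lia.
exists (rep_mid m ++ rep_mid m.+1); last by rewrite mem_cat !inE negb_or e_lo e_hi.
by apply: repair_even_node; rewrite ?size_cat //; exact: rep_mid_represents.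
Qed.

Lemma exists_repair_seq (k i e : nat) : (0 < k)%N -> (i < 2 * k + 1)%N ->
  exists2 s, repair_seq k i s & e \notin s.
Proof.
have : exists m, i = (2 * m + 1)%N \/ i = (2 * m)%N.
  by exists i./2; rewrite -divn2; lia.
case=> m [-> | ->] k0 ik.
  have mk : (m < k)%N by lia.
  apply: (repair_unit_node _ (gcoln_odd k m) (rep_lo_represents mk)
                           (rep_hi_represents mk)).
  - by apply/negP => /rep_lo_le; lia.
  - by apply/negP => /rep_hi_gt; lia.
  - by move=> x /rep_lo_le x_le; apply/negP => /rep_hi_gt; lia.
case: m ik => [|m] ik.
  rewrite muln0; apply: (repair_unit_node _ (gcoln0 k)
                          (rep_mid_represents k0) (rep_hi_represents k0)).
  - by rewrite inE.
  - by apply/negP => /rep_hi_gt.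
  - by move=> x; rewrite inE => /eqP ->; apply/negP => /rep_hi_gt.
case: (ltngtP m.+1 k) => [mk | km | km]; first exact: repair_even_node_avoiding.
  by lia.
have mk : (m < k)%N by lia.
rewrite km; apply: (repair_unit_node _ (gcoln_last km)
                      (rep_lo_represents mk) (rep_mid_represents mk)).
- by apply/negP => /rep_lo_le; lia.
- by rewrite inE; lia.
- by move=> x /rep_lo_le x_le; rewrite inE; lia.
Qed.

Lemma big_ord_mem_seq (R : Type) (idx : R) (op : Monoid.com_law idx) n
    (s : seq nat) (F : nat -> R) :
  uniq s -> all (fun x => x < n)%N s ->
  \big[op/idx]_(j in [set j : 'I_n | val j \in s]) F (val j)
    = \big[op/idx]_(x <- s) F x.
Proof.
move=> us sn; rewrite (eq_bigl (fun j : 'I_n => val j \in s)) => [|j]; last by rewrite inE.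
rewrite -(big_map val (mem s) F) -big_filter.
apply/perm_big/uniq_perm; rewrite ?filter_uniq ?map_inj_uniq ?index_enum_uniq //.
  exact: val_inj.
move=> x; rewrite mem_filter /=; case xs: (x \in s) => //=.
have xn : (x < n)%N by move/allP: sn => /(_ x xs).
by apply/mapP; exists (Ordinal xn); rewrite ?mem_index_enum.
Qed.

Lemma allows_repair_seq k (E : {set 'I_(2 * k + 1)}) (i : 'I_(2 * k + 1)) s :
  repair_seq k i s -> {in E, forall x, val x \notin s} -> allows_repair E 3 i.
Proof.
case=> us sk ss ins gi Es; exists [set j | val j \in s]; split.
- split; first by rewrite inE.
  by rewrite gcolE gi -(big_ord_mem_seq _ _ us sk); apply: eq_bigr.
- apply/pred0P => x /=; rewrite inE; apply/negbTE/nandP.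
  by have [xE|] := boolP (x \in E); [left; apply: Es | right].
- by rewrite -sum1_card (big_ord_mem_seq _ (fun _ => 1%N) us sk) sum1_size.
Qed.

Lemma card_le2_cover (T : finType) (E : {set T}) i :
  i \in E -> (#|E| <= 2)%N -> exists e, {in E, forall x, x = i \/ x = e}.
Proof.
move=> iE; rewrite (cardsD1 i) iE add1n ltnS => /card_le1_eqP le1.
have [E0 | [e ei]] := set_0Vmem (E :\ i); [exists i | exists e] => x xE;
  have [-> | xi] := eqVneq x i; do ?by left.
- by have := in_set0 x; rewrite -E0 !inE xi xE.
- by right; apply: le1; rewrite // !inE xi xE.
Qed.

Theorem theorem4p4 (k : nat) (hk : (2 <= k)%N) (E : {set 'I_(2 * k + 1)}) :
  (#|E| <= 2)%N -> parallel_repair E 3.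
Proof.
move=> E2 i iE.
have [e Ecover] := card_le2_cover iE E2.
have [s si es] := exists_repair_seq (val e) (ltnW hk) (ltn_ord i).
apply: (allows_repair_seq si) => x /Ecover [] ->; last exact: es.
by case: si.
Qed.
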